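(* Let $k, r \geq 1$ be integers and let $G$ be a bipartite graph with bipartition classes $X = \{x_1,\ldots,x_a\}$ and $Y=\{y_1,\ldots,y_b\}$ (with these fixed orderings) and minimum degree at least $2^9 \cdot r \cdot k$. Then there are sets $U_1,\ldots,U_k$ and $W_1,\ldots,W_k$ such that: (1) for each $i \in [k]$, $U_i$ is a segment of $X$ and $W_i$ is a segment of $Y$; (2) for all distinct $i,j \in [k]$, $U_i \cap U_j = \emptyset$ and $W_i \cap W_j = \emptyset$; (3) for every $i \in [k]$, the average degree of the induced subgraph $G[U_i \cup W_i]$ is at least $r$.
   Context: $[k]=\{1,\ldots,k\}$. A segment of $X$ is a set of the form $\{x_i,x_{i+1},\ldots,x_j\}$ for some $1 \le i < j \le a$; a segment of $Y$ is a set of the form $\{y_i,\ldots,y_j\}$ for some $1\le i<j\le b$. *)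

From mathcomp Require Import all_boot all_order all_algebra.
Set Implicit Arguments. Unset Strict Implicit. Unset Printing Implicit Defensive.
Import Order.TTheory GRing.Theory Num.Theory.

(* A bipartite graph with ordered classes X = 'I_a (x_1..x_a ↦ 0..a-1)
   and Y = 'I_b, given by its edge relation E : 'I_a -> 'I_b -> bool. *)

Definition nbhX (a b : nat) (E : 'I_a -> 'I_b -> bool) (x : 'I_a) : {set 'I_b} :=
  [set y | E x y].
Definition nbhY (a b : nat) (E : 'I_a -> 'I_b -> bool) (y : 'I_b) : {set 'I_a} :=
  [set x | E x y].

Definition min_degree_ge (a b : nat) (E : 'I_a -> 'I_b -> bool) (d : nat) : Prop :=
  (forall x : 'I_a, d <= #|nbhX E x|) /\ (forall y : 'I_b, d <= #|nbhY E y|).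

Definition segment (n : nat) (S : {set 'I_n}) : Prop :=
  exists i j : nat, i < j < n /\ S = [set v : 'I_n | i <= v <= j].

Definition n_edges (a b : nat) (E : 'I_a -> 'I_b -> bool)
  (U : {set 'I_a}) (W : {set 'I_b}) : nat :=
  #|[set p : 'I_a * 'I_b | [&& p.1 \in U, p.2 \in W & E p.1 p.2]]|.

Definition avg_degree (a b : nat) (E : 'I_a -> 'I_b -> bool)
  (U : {set 'I_a}) (W : {set 'I_b}) : rat :=
  ((2 * n_edges E U W)%:R / (#|U| + #|W|)%:R)%R.

From mathcomp Require Import all_boot all_order all_algebra.
From mathcomp Require Import zify.

(* By symmetry assume |Y| <= |X|.  Cut X into k consecutive blocks of
   s = |X|/k >= 2 vertices and sweep Y from left to right: at each round take
   the least q such that the segment [cur, q) of Y is dense against some unused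
   block, i.e. r (s + q - cur) <= 2 e(block, [cur, q)), and give it to that
   block.  By minimality of q every other unused block has
   2 e(block, [cur, q)) <= (r + 4) s + r (q - cur), so the invariant
   t (r + 4) s + r (|Y| - cur) <= 2 e(block, [cur, |Y|)), for t the number of
   rounds still to come, survives the round.  It holds at the start because
   each block sends at least s 2^9 r k edges to Y while |Y| <= 2 k s. *)

Set Implicit Arguments.
Unset Strict Implicit.
Unset Printing Implicit Defensive.

Import GRing.Theory Num.Theory.

Section EdgeCounts.
Variables (a b : nat) (E : 'I_a -> 'I_b -> bool).
Implicit Types (U : {set 'I_a}) (W : {set 'I_b}).

Lemma n_edgesE U W : n_edges E U W = \sum_(x in U) \sum_(y in W) E x y.
Proof.
rewrite /n_edges -sum1dep_card pair_big_dep /= big_mkcond [RHS]big_mkcond.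
by apply: eq_bigr => -[x y] _ /=; case: (x \in U); case: (y \in W); case: (E x y).
Qed.

Lemma n_edgesUr U W1 W2 : [disjoint W1 & W2] ->
  n_edges E U (W1 :|: W2) = n_edges E U W1 + n_edges E U W2.
Proof.
move=> dW; rewrite !n_edgesE -big_split; apply: eq_bigr => x _.
by rewrite -bigU //; apply: eq_bigl => y; rewrite !inE.
Qed.

Lemma n_edges_le U W : n_edges E U W <= #|U| * #|W|.
Proof.
rewrite n_edgesE -sum_nat_const; apply: leq_sum => x _.
by rewrite -sum1_card; apply: leq_sum => y _; case: (E x y).
Qed.

Lemma n_edges_setT_ge U d : (forall x, d <= #|nbhX E x|) ->
  #|U| * d <= n_edges E U [set: 'I_b].
Proof.
move=> deg; rewrite n_edgesE -sum_nat_const; apply: leq_sum => x _.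
apply: leq_trans (deg x) _; rewrite -sum1dep_card big_mkcond [leqRHS]big_mkcond.
by apply: leq_sum => y _; rewrite inE; case: (E x y).
Qed.

Lemma avg_degree_ge U W r : 0 < #|U| + #|W| ->
  r * (#|U| + #|W|) <= 2 * n_edges E U W -> (r%:R <= avg_degree E U W :> rat)%R.
Proof. by move=> pos dense; rewrite /avg_degree ler_pdivlMr ?ltr0n // -natrM ler_nat. Qed.

End EdgeCounts.

Lemma n_edges_tr a b (E : 'I_a -> 'I_b -> bool) U W :
  n_edges (fun y x => E x y) W U = n_edges E U W.
Proof. by rewrite !n_edgesE exchange_big. Qed.

Lemma avg_degree_tr a b (E : 'I_a -> 'I_b -> bool) U W :
  avg_degree (fun y x => E x y) W U = avg_degree E U W.
Proof. by rewrite /avg_degree n_edges_tr addnC. Qed.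

Definition ord_range n (i j : nat) : {set 'I_n} := [set v : 'I_n | i <= v < j].

Lemma card_ord_range n i j : #|ord_range n i j| = minn n j - i.
Proof.
rewrite -sum1dep_card big_mkcond /=.
elim: n => [|n IH]; first by rewrite big_ord0 min0n.
by rewrite big_ord_recr /= IH; case: ifP; lia.
Qed.

Lemma ord_rangeU n i j l : i <= j <= l ->
  ord_range n i l = ord_range n i j :|: ord_range n j l.
Proof. by move=> ijl; apply/setP => v; rewrite !inE; lia. Qed.

Lemma disjoint_ord_range n i j i' j' : j <= i' ->
  [disjoint ord_range n i j & ord_range n i' j'].
Proof. by move=> ji'; rewrite -setI_eq0; apply/eqP/setP => v; rewrite !inE; lia. Qed.

Lemma segment_ord_range n i j : i.+1 < j <= n -> segment (ord_range n i j).
Proof.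
by move=> ij; exists i, j.-1; split; [lia | apply/setP => v; rewrite !inE; lia].
Qed.

Lemma ord_range_full n : ord_range n 0 n = [set: 'I_n].
Proof. by apply/setP => v; rewrite !inE ltn_ord. Qed.

Lemma disjoint_blocks n s j j' : j != j' ->
  [disjoint ord_range n (j * s) (j * s + s) & ord_range n (j' * s) (j' * s + s)].
Proof.
move=> jj'; case: (ltngtP j j') => [lt | gt | eq]; last by rewrite eq eqxx in jj'.
  by apply: disjoint_ord_range; rewrite -mulSnr leq_mul2r lt orbT.
by rewrite disjoint_sym; apply: disjoint_ord_range; rewrite -mulSnr leq_mul2r gt orbT.
Qed.

Section Sweep.
(* [N j x y] stands for the number of edges between block [j] of X and the
   segment [x, y) of Y. *)
Variables (I : finType) (B r s : nat) (N : I -> nat -> nat -> nat).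
Hypothesis s_ge2 : 2 <= s.
Hypothesis N_split : forall j x y z, x <= y <= z -> N j x z = N j x y + N j y z.
Hypothesis N_col : forall j y, N j y y.+1 <= s.

Lemma N_nil j x : N j x x = 0.
Proof. by have := @N_split j x x x; rewrite leqnn; lia. Qed.

Lemma N_le j x y : x <= y -> N j x y <= s * (y - x).
Proof.
elim: y => [|y IH]; first by rewrite leqn0 => /eqP ->; rewrite N_nil.
rewrite leq_eqVlt => /orP [/eqP -> | xy]; first by rewrite N_nil.
rewrite ltnS in xy; rewrite (@N_split j x y y.+1) ?xy ?leqnSn // subSn // mulnS addnC.
by rewrite leq_add ?N_col ?IH.
Qed.

Definition dense j x y := r * (s + (y - x)) <= 2 * N j x y.

Definition rich t x j := t * (r + 4) * s + r * (B - x) <= 2 * N j x B.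

Lemma rich_room t x j : x <= B -> rich t.+1 x j -> x.+1 < B.
Proof.
rewrite /rich => xB; have := N_le j xB.
case: (ltnP x.+1 B) => // Bx; have short : B - x <= 1 by lia.
have := leq_mul (leqnn s) short; nia.
Qed.

Lemma rich_dense t x j : rich t.+1 x j -> dense j x B.
Proof.
rewrite /rich /dense => rich_x; apply: leq_trans rich_x.
by rewrite mulnDr leq_add2r -mulnA mulSn mulnDl -addnA leq_addr.
Qed.

Lemma sparse_below j x p : x <= p -> (x.+1 < p -> ~~ dense j x p) ->
  2 * N j x p.+1 <= (r + 4) * s + r * (p.+1 - x).
Proof.
move=> xp sparse; rewrite (@N_split j x p) ?xp ?leqnSn //.
have := N_col j p; have := N_le j xp.
rewrite /dense subSn //; case: (ltnP x.+1 p) => [/sparse | short].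
  rewrite -ltnNge; move: (p - x) => d; nia.
have : p - x <= 1 by lia.
move: (p - x) => d; nia.
Qed.

Lemma rich_shift t x q j : x <= q <= B ->
  2 * N j x q <= (r + 4) * s + r * (q - x) -> rich t.+1 x j -> rich t q j.
Proof.
move=> /andP [xq qB]; rewrite /rich (@N_split j x q B) ?xq ?qB //.
have -> : B - x = (q - x) + (B - q) by lia.
rewrite mulnDr mulSnr; lia.
Qed.

Lemma sweep_step t (J : {set I}) x j0 : j0 \in J -> x <= B ->
  {in J, forall j, rich t.+1 x j} ->
  exists j q, [/\ j \in J, x.+1 < q <= B, dense j x q
              & {in J :\ j, forall j', rich t q j'}].
Proof.
move=> Jj0 xB richJ; have room := rich_room xB (richJ j0 Jj0).
pose P q := (x.+1 < q) && [exists j in J, dense j x q].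
have PB : P B.
  by rewrite /P room; apply/existsP; exists j0; rewrite Jj0 (rich_dense (richJ j0 Jj0)).
case: (ex_minnP (ex_intro P B PB)) => q /andP [xq /existsP [j /andP [Jj dense_j]]] qmin.
have qB : q <= B := qmin B PB.
exists j, q; split; rewrite ?xq //; move=> j' /setD1P [_ Jj'].
have [p q_p] : exists p, q = p.+1 by exists q.-1; lia.
apply: rich_shift (richJ j' Jj'); first lia.
rewrite q_p; apply: sparse_below; first lia.
move=> xp; apply/negP => dense_j'.
have : q <= p by apply: qmin; rewrite /P xp; apply/existsP; exists j'; rewrite Jj'.
lia.
Qed.

Lemma sweep t (J : {set I}) x : t <= #|J| -> x <= B -> {in J, forall j, rich t x j} ->
  exists (g : 'I_t -> I) (lo hi : 'I_t -> nat),
    [/\ forall i, [/\ g i \in J, x <= lo i, (lo i).+1 < hi i <= B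
                      & dense (g i) (lo i) (hi i)],
         injective g &
         forall i i' : 'I_t, i < i' -> hi i <= lo i'].
Proof.
elim: t J x => [|t IH] J x tJ xB richJ.
  have g : 'I_0 -> I by case.
  by exists g, (fun=> 0), (fun=> 0); split=> -[].
have [j0 Jj0] : exists j0, j0 \in J by apply/set0Pn; rewrite -card_gt0; lia.
have [j [q [Jj /andP [xq qB] dense_j rich_rest]]] := sweep_step Jj0 xB richJ.
have tJ' : t <= #|J :\ j| by move: tJ; rewrite (cardsD1 j J) Jj.
have [g [lo [hi [Hg g_inj sorted_g]]]] := IH _ q tJ' qB rich_rest.
pose ext T (y : T) (f : 'I_t -> T) (i : 'I_t.+1) :=
  if unlift ord0 i is Some i' then f i' else y.
have ext0 T y f : @ext T y f ord0 = y by rewrite /ext unlift_none.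
have extS T y f i : @ext T y f (lift ord0 i) = f i by rewrite /ext liftK.
exists (ext _ j g), (ext _ x lo), (ext _ q hi); split.
- move=> i; case: (unliftP ord0 i) => [i'|] ->; rewrite ?ext0 ?extS; last first.
    by split=> //; rewrite xq qB.
  by have [/setD1P [_ Jgi] lo_i hi_i dense_i] := Hg i'; split=> //; lia.
- move=> i1 i2.
  case: (unliftP ord0 i1) => [i1'|] ->; case: (unliftP ord0 i2) => [i2'|] ->;
    rewrite ?ext0 ?extS //; [move=> /g_inj -> // | move=> gj | move=> jg].
  + by have [/setD1P [+ _] _ _ _] := Hg i1'; rewrite gj eqxx.
  + by have [/setD1P [+ _] _ _ _] := Hg i2'; rewrite -jg eqxx.
- move=> i1 i2.
  case: (unliftP ord0 i1) => [i1'|] ->; case: (unliftP ord0 i2) => [i2'|] ->;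
    rewrite ?ext0 ?extS ?ltnn //.
  + by rewrite ltnS; apply: sorted_g.
  + by have [_ lo_i _ _] := Hg i2'.
Qed.

End Sweep.

Lemma dense_segment_pairs (k r a b : nat) (E : 'I_a -> 'I_b -> bool) :
  1 <= k -> 1 <= r -> 0 < a -> b <= a ->
  (forall x, 2 ^ 9 * r * k <= #|nbhX E x|) ->
  exists (U : 'I_k -> {set 'I_a}) (W : 'I_k -> {set 'I_b}),
    (forall i : 'I_k, segment (U i) /\ segment (W i)) /\
    (forall i j : 'I_k, i != j ->
        [disjoint U i & U j] /\ [disjoint W i & W j]) /\
    (forall i : 'I_k, (r%:R <= avg_degree E (U i) (W i))%R).
Proof.
move=> k_gt0 r_gt0 a_gt0 ba deg.
have Db : 2 ^ 9 * r * k <= b.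
  by rewrite -[b]card_ord; apply: leq_trans (deg (Ordinal a_gt0)) (max_card _).
pose s := a %/ k.
have ska : s * k <= a := leq_trunc_div a k.
have aks : a < s.+1 * k := ltn_ceil a k_gt0.
have s_ge2 : 2 <= s by rewrite leq_divRL //; nia.
have bks : b <= 2 * k * s by nia.
have block_le (j : 'I_k) : j * s + s <= a.
  by rewrite -mulSnr mulnC (leq_trans _ ska) // leq_mul2l ltn_ord orbT.
pose block (j : 'I_k) := ord_range a (j * s) (j * s + s).
have card_block j : #|block j| = s.
  by rewrite card_ord_range (minn_idPr (block_le j)); lia.
pose N j x y := n_edges E (block j) (ord_range b x y).
have N_split j x y z : x <= y <= z -> N j x z = N j x y + N j y z.
  by move=> xyz; rewrite /N (ord_rangeU _ xyz) n_edgesUr // disjoint_ord_range.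
have N_col j y : N j y y.+1 <= s.
  apply: leq_trans (n_edges_le _ _ _) _; rewrite card_block card_ord_range.
  by rewrite -[leqRHS]muln1 leq_mul2l; apply/orP; right; lia.
have rich0 : {in [set: 'I_k], forall j, rich b r s N k 0 j}.
  move=> j _; rewrite /rich /N subn0 ord_range_full.
  have := n_edges_setT_ge (block j) deg; rewrite card_block; nia.
have [|g [lo [hi [Hg g_inj sorted]]]] := sweep s_ge2 N_split N_col _ (leq0n b) rich0.
  by rewrite cardsT card_ord.
exists (fun i => block (g i)), (fun i => ord_range b (lo i) (hi i)); split; [|split].
- move=> i; have [_ _ lohi _] := Hg i; split; last exact: segment_ord_range.
  by apply: segment_ord_range; rewrite block_le; lia.
- move=> i j ij; split.
    by apply: disjoint_blocks; apply: contra ij => /eqP/ord_inj/g_inj/eqP.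
  case: (ltngtP i j) => [lt | gt | /ord_inj eq]; last by rewrite eq eqxx in ij.
    exact/disjoint_ord_range/sorted.
  by rewrite disjoint_sym; apply/disjoint_ord_range/sorted.
- move=> i; have [_ _ /andP [lohi hib] dense_i] := Hg i.
  by apply: avg_degree_ge; rewrite card_block card_ord_range (minn_idPr hib); first lia.
Qed.

Theorem lemma11 (k r a b : nat) (E : 'I_a -> 'I_b -> bool) :
  1 <= k -> 1 <= r -> 0 < a + b ->
  min_degree_ge E (2 ^ 9 * r * k) ->
  exists (U : 'I_k -> {set 'I_a}) (W : 'I_k -> {set 'I_b}),
    (forall i : 'I_k, segment (U i) /\ segment (W i)) /\
    (forall i j : 'I_k, i != j ->
        [disjoint U i & U j] /\ [disjoint W i & W j]) /\
    (forall i : 'I_k, (r%:R <= avg_degree E (U i) (W i))%R).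
Proof.
move=> k_gt0 r_gt0 ab_gt0 [degX degY].
have [ba | ab] := leqP b a; first by apply: dense_segment_pairs => //; lia.
have [W [U [seg [disj avg]]]] :=
  dense_segment_pairs (E := fun y x => E x y) k_gt0 r_gt0
    (leq_ltn_trans (leq0n a) ab) (ltnW ab) degY.
exists U, W; split; [|split].
- by move=> i; case: (seg i).
- by move=> i j ij; case: (disj i j ij).
- by move=> i; rewrite -avg_degree_tr.
Qed.
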